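(* Let $P\subseteq M_{\mathbb R}$ be an $n$-dimensional reflexive polytope and let $\Lambda:=\Lambda_{n-2}$ be the sublattice of $M$ generated by all lattice points lying in faces of $P$ of dimension $n-2$. Let $x\in\mathcal R\setminus\Lambda$ and let $y\in\partial P\cap\Lambda$ with $y\notin\mathcal F_x$. Then $\langle\eta_x,y\rangle\ge 1$, and the point $p(x,y):=\langle\eta_x,y\rangle\,x+y$ lies in $\mathcal R\setminus\Lambda$ and is a root orthogonal to $x$, i.e. $\langle\eta_x,p(x,y)\rangle=0=\langle\eta_{p(x,y)},x\rangle$.
   Context: $M\cong\mathbb Z^n$ is a lattice, $N=\mathrm{Hom}_{\mathbb Z}(M,\mathbb Z)$ its dual with pairing $\langle\cdot,\cdot\rangle$. A reflexive polytope is an $n$-dimensional lattice polytope $P\subseteq M_{\mathbb R}$ containing the origin in its interior such that the dual polytope $P^*=\{u\in N_{\mathbb R}:\langle u,m\rangle\ge-1\ \forall m\in P\}$ has vertices in $N$; equivalently every facet $F$ of $P$ equals $\{m\in P:\langle\eta_F,m\rangle=-1\}$ for a unique $\eta_F\in N$ with $\langle \eta_F,\cdot\rangle\ge -1$ on $P$. $\partial P$ is the boundary of $P$. $\mathcal R$ (the set of Demazure roots of $P$) is the set of lattice points of $M$ lying in the relative interior of some facet of $P$. For $x\in\mathcal R$, $\mathcal F_x$ denotes the unique facet of $P$ containing $x$, and $\eta_x:=\eta_{\mathcal F_x}\in N$ is its inner normal, so $\langle\eta_x,\mathcal F_x\rangle=-1$. Two roots $x,y\in\mathcal R$ are called orthogonal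 if $\langle\eta_x,y\rangle=0=\langle\eta_y,x\rangle$. *)

(* Reflexive polytopes in M_R = R^n (R : realType),
   lattice M = Z^n as 'rV[int]_n, dual N identified with 'rV[int]_n
   via the standard dot-product pairing. *)
From HB Require Import structures.
From mathcomp Require Import all_boot all_order all_algebra.
From mathcomp Require Import reals.
Set Implicit Arguments. Unset Strict Implicit. Unset Printing Implicit Defensive.
Import Order.TTheory GRing.Theory Num.Theory.
Local Open Scope ring_scope.

Section Polytopes.
Variables (R : realType) (n : nat).

Local Notation pt := 'rV[R]_n.
Local Notation lat := 'rV[int]_n.

Definition toR (m : lat) : pt := map_mx (fun z : int => z%:~R) m.

Definition pairR (u : lat) (m : pt) : R := \sum_(i < n) (u 0 i)%:~R * m 0 i.
Definition dotR (u m : pt) : R := \sum_(i < n) u 0 i * m 0 i.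
Definition pairZ (u m : lat) : int := \sum_(i < n) u 0 i * m 0 i.

Definition conv (V : seq lat) : pt -> Prop := fun m =>
  exists w : 'I_(size V) -> R, (forall i, 0 <= w i) /\ \sum_i w i = 1 /\
    m = \sum_i w i *: toR (nth 0 V i).

Definition face (P F : pt -> Prop) : Prop :=
  exists (u : pt) (c : R), (forall m, P m -> c <= dotR u m) /\
    (forall m, F m <-> (P m /\ dotR u m = c)).

Definition affdim_ge (F : pt -> Prop) (k : nat) : Prop :=
  exists (p0 : pt) (q : 'I_k -> pt), F p0 /\ (forall i, F (q i)) /\
    row_free (\matrix_(i < k) (q i - p0)).

Definition affdim (F : pt -> Prop) (d : nat) : Prop :=
  affdim_ge F d /\ ~ affdim_ge F d.+1.

Definition affhull (F : pt -> Prop) : pt -> Prop := fun m =>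
  exists k (p : 'I_k -> pt) (w : 'I_k -> R), (forall i, F (p i)) /\
    \sum_i w i = 1 /\ m = \sum_i w i *: p i.

Definition near (m z : pt) (e : R) : Prop := forall j, `|z 0 j - m 0 j| < e.

Definition relint (F : pt -> Prop) : pt -> Prop := fun m =>
  F m /\ exists e, 0 < e /\ forall z, affhull F z -> near m z e -> F z.

Definition interior (P : pt -> Prop) : pt -> Prop := fun m =>
  exists e, 0 < e /\ forall z, near m z e -> P z.

Definition boundary (P : pt -> Prop) : pt -> Prop := fun m =>
  P m /\ ~ interior P m.

Definition facet (P F : pt -> Prop) : Prop := face P F /\ affdim F n.-1.

Definition normal (P F : pt -> Prop) (eta : lat) : Prop :=
  (forall m, P m -> -1 <= pairR eta m) /\
  (forall m, F m <-> (P m /\ pairR eta m = -1)).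

Definition reflexive_polytope (V : seq lat) : Prop :=
  affdim (conv V) n /\ interior (conv V) 0 /\
  forall F, facet (conv V) F -> exists eta, normal (conv V) F eta.

Definition is_root (V : seq lat) (x : lat) : Prop :=
  exists F, facet (conv V) F /\ relint F (toR x).

Definition in_Lambda (V : seq lat) (z : lat) : Prop :=
  exists k (g : 'I_k -> lat) (c : 'I_k -> int),
    (forall i, exists (F : pt -> Prop) (d : nat),
        face (conv V) F /\ affdim F d /\ d.+2 = n /\ F (toR (g i))) /\
    z = \sum_i c i *: g i.

End Polytopes.

Arguments reflexive_polytope R {n} V.
Arguments is_root R {n} V x.
Arguments in_Lambda R {n} V z.
Arguments toR {R n} m.

From mathcomp Require Import all_boot all_order all_algebra.
From mathcomp Require Import reals.
From Stdlib Require Import Classical.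
From mathcomp Require Import ring lra zify.
Set Implicit Arguments. Unset Strict Implicit. Unset Printing Implicit Defensive.
Import Order.TTheory GRing.Theory Num.Theory.
Local Open Scope ring_scope.

(* Since 0 is interior to P, Farkas' lemma makes P the intersection of the
   half-spaces [<u, -> >= -1] over the finitely many vertices [u] of the dual
   polytope; these are the inner facet normals, hence integral as P is
   reflexive.  A lattice point of P on two distinct facets lies in an
   (n-2)-face, hence in Λ; as x ∉ Λ, every normal other than η_x pairs
   nonnegatively with x.  Let k = <η_x, y> >= 0.  If some facet through y
   has a normal η with <η, x> = 0, then (k + 1) x + y lies on F_x and on that
   facet, so (k + 1) x ∈ Λ, which forces k >= 1; and p = k x + y lies in the
   relative interior of that facet, since on any further facet p, hence x,
   would be in Λ.  Such a facet exists: otherwise all facets through y pair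
   positively with x; for k = 0 a point x + t y would lie on F_x and on a
   facet through y, and for k >= 1 the point p would pair nonnegatively with
   every normal, forcing p = 0 and x = -y ∈ Λ. *)

Section DotProduct.
Variables (R : realType) (k : nat).
Implicit Types (u v m : 'rV[R]_k) (a : R).

Lemma dotRE u m : dotR u m = (u *m m^T) 0 0.
Proof. by rewrite /dotR !mxE; apply: eq_bigr => i _; rewrite !mxE. Qed.

Lemma dotRC u m : dotR u m = dotR m u.
Proof. by rewrite /dotR; apply: eq_bigr => i _; rewrite mulrC. Qed.

Lemma dotRDl u v m : dotR (u + v) m = dotR u m + dotR v m.
Proof. by rewrite /dotR -big_split; apply: eq_bigr => i _; rewrite !mxE mulrDl. Qed.

Lemma dotRDr u v m : dotR m (u + v) = dotR m u + dotR m v.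
Proof. by rewrite dotRC dotRDl !(dotRC m). Qed.

Lemma dotRZl a u m : dotR (a *: u) m = a * dotR u m.
Proof. by rewrite /dotR mulr_sumr; apply: eq_bigr => i _; rewrite !mxE mulrA. Qed.

Lemma dotRZr a u m : dotR m (a *: u) = a * dotR m u.
Proof. by rewrite dotRC dotRZl dotRC. Qed.

Lemma dotRNl u m : dotR (- u) m = - dotR u m.
Proof. by rewrite -scaleN1r dotRZl mulN1r. Qed.

Lemma dotRNr u m : dotR m (- u) = - dotR m u.
Proof. by rewrite dotRC dotRNl dotRC. Qed.

Lemma dotRBr u v m : dotR m (u - v) = dotR m u - dotR m v.
Proof. by rewrite dotRDr dotRNr. Qed.

Lemma dotR0l m : dotR 0 m = 0.
Proof. by rewrite /dotR big1 // => i _; rewrite mxE mul0r. Qed.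

Lemma dotR0r m : dotR m 0 = 0.
Proof. by rewrite dotRC dotR0l. Qed.

Lemma dotR_sumr (I : finType) (w : I -> R) (f : I -> 'rV[R]_k) u :
  dotR u (\sum_i w i *: f i) = \sum_i w i * dotR u (f i).
Proof.
rewrite /dotR; under eq_bigr => j _ do rewrite summxE mulr_sumr.
rewrite exchange_big /=; apply: eq_bigr => i _.
by rewrite mulr_sumr; apply: eq_bigr => j _; rewrite !mxE; ring.
Qed.

Lemma dotR_gt0 u : u != 0 -> 0 < dotR u u.
Proof.
move=> un0; have [j uj] : exists j, u 0 j != 0.
  apply/existsP; apply: contraNT un0 => /existsPn uj0; apply/eqP/rowP => j.
  by rewrite mxE; apply/eqP; move: (uj0 j); rewrite negbK.
rewrite /dotR (bigD1 j) //= ltr_wpDr //; last by rewrite -expr2 exprn_even_gt0.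
by apply: sumr_ge0 => i _; rewrite -expr2 sqr_ge0.
Qed.

Lemma dotR_row_mx u m (c c' : 'rV[R]_1) :
  dotR (row_mx u c) (row_mx m c') = dotR u m + c 0 0 * c' 0 0.
Proof.
rewrite /dotR big_split_ord /=; congr (_ + _).
  by apply: eq_bigr => i _; rewrite !row_mxEl.
by rewrite big_ord1 !row_mxEr.
Qed.

Lemma dotR_near v m z (e : R) : 0 <= e -> near m z e ->
  `|dotR v z - dotR v m| <= (\sum_j `|v 0 j|) * e.
Proof.
move=> e0 nz; rewrite -dotRBr /dotR mulr_suml.
apply: le_trans (ler_norm_sum _ _ _) _; apply: ler_sum => j _.
by rewrite normrM ler_wpM2l // !mxE; exact: ltW (nz j).
Qed.

End DotProduct.

Section LatticePairing.
Variables (R : realType) (n : nat).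
Implicit Types (e a b : 'rV[int]_n).

Lemma pairR_dotR e (m : 'rV[R]_n) : pairR e m = dotR (toR e) m.
Proof. by rewrite /pairR /dotR; apply: eq_bigr => i _; rewrite mxE. Qed.

Lemma dotR_toR e a : dotR (toR e) (toR a) = (pairZ e a)%:~R :> R.
Proof.
rewrite -pairR_dotR /pairR /pairZ rmorph_sum /=; apply: eq_bigr => i _.
by rewrite mxE rmorphM.
Qed.

Lemma pairR_toR e a : pairR e (toR a) = (pairZ e a)%:~R :> R.
Proof. by rewrite pairR_dotR dotR_toR. Qed.

Lemma toR_inj : injective (@toR R n).
Proof.
move=> a b /rowP ab; apply/rowP => i; have := ab i; rewrite !mxE.
by move/eqP; rewrite eqr_int => /eqP.
Qed.

Lemma toR0 : toR (0 : 'rV[int]_n) = 0 :> 'rV[R]_n.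
Proof. by apply/rowP => i; rewrite !mxE. Qed.

Lemma pairZDr e a b : pairZ e (a + b) = pairZ e a + pairZ e b.
Proof. by rewrite /pairZ -big_split; apply: eq_bigr => i _; rewrite mxE mulrDr. Qed.

Lemma pairZZr e c a : pairZ e (c *: a) = c * pairZ e a.
Proof. by rewrite /pairZ mulr_sumr; apply: eq_bigr => i _; rewrite mxE mulrCA. Qed.

Lemma pairZ0r e : pairZ e 0 = 0.
Proof. by rewrite /pairZ big1 // => i _; rewrite mxE mulr0. Qed.

End LatticePairing.

Lemma intrN1 (R : realType) : ((-1 : int)%:~R : R) = -1.
Proof. by rewrite intrN. Qed.

Lemma intr_eqN1 (R : realType) (a : int) : (a%:~R = -1 :> R) -> a = -1.
Proof. by move=> h; apply/eqP; rewrite -(eqr_int R) h intrN1. Qed.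

Lemma intr_geN1 (R : realType) (a : int) : (-1 <= a%:~R :> R) -> -1 <= a.
Proof. by rewrite -(intrN1 R) ler_int. Qed.

Section Farkas.
Variables (R : realType) (k : nat).
Local Notation vec := 'rV[R]_k.

Definition cone N (a : 'I_N -> vec) (b : vec) : Prop :=
  exists w : 'I_N -> R, (forall i, 0 <= w i) /\ b = \sum_i w i *: a i.

Lemma cone_lift N (a : 'I_N.+1 -> vec) b : cone (fun i => a (lift ord0 i)) b -> cone a b.
Proof.
move=> [w [w0 bE]]; exists (fun i => if unlift ord0 i is Some j then w j else 0).
split; first by move=> i; case: unlift.
rewrite big_ord_recl /= unlift_none scale0r add0r bE.
by apply: eq_bigr => i _; rewrite liftK.
Qed.

(* [proj] projects along [a ord0] onto the kernel of [y] (up to the factor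
   [- dotR y (a ord0)]); the missing coefficient of [a ord0] is nonnegative
   because [y] separates [b] from the other generators. *)
Lemma cone_project N (a : 'I_N.+1 -> vec) b y
    (proj := fun c => - dotR y (a ord0) *: c + dotR y c *: a ord0) :
  (forall i, 0 <= dotR y (a (lift ord0 i))) -> dotR y (a ord0) < 0 -> dotR y b < 0 ->
  cone (fun i => proj (a (lift ord0 i))) (proj b) -> cone a b.
Proof.
set a0 := a ord0; set a' := fun i => a (lift ord0 i) => ya' ya0 yb [w [w0 bE]].
pose al := - dotR y a0; have al0 : 0 < al by rewrite /al oppr_gt0.
pose c := (\sum_i w i * dotR y (a' i) - dotR y b) / al.
exists (fun i => if unlift ord0 i is Some j then w j else c); split.
  move=> i; case: unlift => //; apply: divr_ge0; last exact: ltW.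
  rewrite subr_ge0; apply: le_trans (ltW yb) _.
  by apply: sumr_ge0 => j _; apply: mulr_ge0; [exact: w0 | exact: ya'].
rewrite big_ord_recl /= unlift_none.
under eq_bigr => i _ do rewrite liftK.
apply: (scalerI (lt0r_neq0 al0)).
rewrite scalerDr scalerA mulrC mulfVK ?(lt0r_neq0 al0) // scaler_sumr.
have -> : al *: b = proj b - dotR y b *: a0 by rewrite /proj addrK.
rewrite bE /proj.
under [X in _ = _ + X]eq_bigr => i _ do rewrite scalerA mulrC -scalerA.
rewrite (eq_bigr (fun i => w i *: (al *: a' i) + (w i * dotR y (a' i)) *: a0)).
  by rewrite big_split /= scalerBl -scaler_suml -addrA addrC.
by move=> i _; rewrite scalerDr scalerA.
Qed.

Lemma farkas N (a : 'I_N -> vec) (b : vec) : ~ cone a b ->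
  exists y, (forall i, 0 <= dotR y (a i)) /\ dotR y b < 0.
Proof.
elim: N a b => [|N IH] a b nc.
  exists (- b); split => [[]//|].
  have bn0 : b != 0.
    apply/eqP => b0; apply: nc; exists (fun _ => 0); split => //.
    by rewrite big_ord0 b0.
  by rewrite dotRNl oppr_lt0 dotR_gt0.
have [y [ya' yb]] := IH _ b (fun c => nc (cone_lift c)).
have [ya0|ya0] := lerP 0 (dotR y (a ord0)).
  by exists y; split=> // i; case: (unliftP ord0 i) => [j ->|->] //; exact: ya'.
have [y' [y'a y'b]] := IH _ _ (fun c => nc (cone_project ya' ya0 yb c)).
exists (- dotR y (a ord0) *: y' + dotR y' (a ord0) *: y); split.
  move=> i; rewrite dotRDl !dotRZl; case: (unliftP ord0 i) => [j ->|->]; last lra.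
  by have := y'a j; rewrite dotRDr !dotRZr (dotRC y') (dotRC y); lra.
by move: y'b; rewrite dotRDl !dotRZl dotRDr !dotRZr (dotRC y'); lra.
Qed.

End Farkas.

Section Kernel.
Variables (R : realType) (m k : nat).
Implicit Type A : 'M[R]_(m, k).

Lemma row_free_row_neq0 p (M : 'M[R]_(p, k)) i : row_free M -> row i M != 0.
Proof.
move=> rf; apply/eqP => ri.
have := row_free_inj rf (etrans (esym (rowE i M)) (etrans ri (esym (mul0mx _ M)))).
by move=> /rowP /(_ i); rewrite !mxE !eqxx /= => /eqP; rewrite oner_eq0.
Qed.

Lemma exists_kernel_vec A : (\rank A < k)%N ->
  exists2 d : 'rV[R]_k, d != 0 & A *m d^T = 0.
Proof.
move=> rk; pose K := kermx A^T.
have Kn0 : K != 0 by rewrite -mxrank_eq0 mxrank_ker mxrank_tr subn_eq0 -ltnNge.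
have [i ri] : exists i, row i K != 0.
  case: (pickP (fun i => row i K != 0)) => [i ri|none]; first by exists i.
  move: Kn0; have -> : K = 0; last by rewrite eqxx.
  by apply/row_matrixP => i; rewrite row0; apply/eqP; move: (none i) => /negbFE.
exists (row i K) => //.
have : row i K *m A^T = 0 by apply/sub_kermxP; exact: row_sub.
by move=> /(congr1 trmx); rewrite trmx_mul trmxK trmx0.
Qed.

Lemma exists_kernel_pair A : (\rank A + 2 <= k)%N ->
  exists d1 d2 : 'rV[R]_k, [/\ A *m d1^T = 0, A *m d2^T = 0 &
     forall a b : R, a *: d1 + b *: d2 = 0 -> a = 0 /\ b = 0].
Proof.
move=> rk; pose K := kermx A^T; pose B := row_base K.
have rB : (1 < \rank K)%N by rewrite mxrank_ker mxrank_tr; lia.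
pose i0 : 'I_(\rank K) := Ordinal (ltn_trans (ltnSn 0) rB).
pose i1 : 'I_(\rank K) := Ordinal rB.
have orth j : A *m (row j B)^T = 0.
  have : row j B *m A^T = 0.
    apply/sub_kermxP; apply: submx_trans (row_sub j B) _.
    by rewrite eq_row_base.
  by move=> /(congr1 trmx); rewrite trmx_mul trmxK trmx0.
exists (row i0 B), (row i1 B); split => // a b ab0.
pose c : 'rV[R]_(\rank K) := \row_j (if j == i0 then a else if j == i1 then b else 0).
have cB : c *m B = 0.
  rewrite mulmx_sum_row (bigD1 i0) //= (bigD1 i1) //= big1.
    by rewrite !mxE eqxx /= addr0.
  by move=> j /andP [j0 j1]; rewrite !mxE (negPf j0) (negPf j1) scale0r.
have := row_free_inj (row_base_free K) (etrans cB (esym (mul0mx _ B))).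
by move=> /rowP c0; have := c0 i0; have := c0 i1; rewrite !mxE eqxx /= => -> ->.
Qed.

Lemma pencil_scale_inj (d1 d2 : 'rV[R]_k) (a b l1 l2 : R) :
  (forall a b : R, a *: d1 + b *: d2 = 0 -> a = 0 /\ b = 0) -> b != 0 ->
  a *: (d1 + l1 *: d2) = b *: (d1 + l2 *: d2) -> l1 = l2.
Proof.
move=> ind b0 e.
have : (a - b) *: d1 + (a * l1 - b * l2) *: d2 = 0.
  apply/rowP => j; have := congr1 (fun M : 'rV[R]_k => M 0 j) e; rewrite !mxE => ej.
  transitivity (a * (d1 0 j + l1 * d2 0 j) - b * (d1 0 j + l2 * d2 0 j)); first by ring.
  by rewrite ej subrr.
move=> /ind [/eqP + /eqP]; rewrite !subr_eq0 => /eqP -> /eqP.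
exact: mulfI.
Qed.

End Kernel.

Section AffineDimension.
Variables (R : realType) (k : nat).
Local Notation pt := 'rV[R]_k.

Lemma affdim_ge_row_free (Q : pt -> Prop) r (q : 'I_r.+1 -> pt) :
  row_free (\matrix_i q i) -> (forall i, Q (q i)) -> affdim_ge Q r.
Proof.
move=> rf Qq.
exists (q ord_max), (fun i => q (widen_ord (leqnSn r) i)); split => //; split => //.
apply: inj_row_free => c cD.
pose c' : 'rV[R]_r.+1 :=
  \row_j (if unlift ord_max j is Some i then c 0 i else - \sum_i c 0 i).
have wl (i : 'I_r) : widen_ord (leqnSn r) i = lift ord_max i.
  by apply: val_inj; rewrite /= /bump leqNgt ltn_ord.
have rq j : row j (\matrix_i q i) = q j by apply/rowP => l; rewrite !mxE.
have : c' *m (\matrix_i q i) = 0.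
  rewrite mulmx_sum_row big_ord_recr /= !mxE unlift_none.
  rewrite -[RHS]cD mulmx_sum_row.
  under eq_bigr => i _ do rewrite !mxE wl liftK rq -wl.
  rewrite rq scaleNr scaler_suml -sumrB; apply: eq_bigr => i _.
  rewrite (_ : row i _ = q (widen_ord (leqnSn r) i) - q ord_max).
    by rewrite scalerBr.
  by apply/rowP => l; rewrite !mxE.
move=> /eqP; rewrite mulmx_free_eq0 // => /eqP c'0.
apply/rowP => i; have := congr1 (fun M : 'rV[R]_r.+1 => M 0 (widen_ord (leqnSn r) i)) c'0.
by rewrite !mxE wl liftK.
Qed.

(* As [u] is -1 on [Q], a base point of an affinely independent family is
   linearly independent of the differences to it. *)
Lemma not_affdim_ge_span (Q : pt -> Prop) p (A : 'M[R]_(p, k)) (u : pt) r :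
  (\rank A <= r)%N -> (forall z, Q z -> dotR u z = -1 /\ (z <= A)%MS) ->
  ~ affdim_ge Q r.
Proof.
move=> rA QA [p0 [q [Qp0 [Qq rf]]]].
pose D := \matrix_(i < r) (q i - p0).
pose E := col_mx D p0.
have EA : (E <= A)%MS.
  rewrite col_mx_sub (proj2 (QA _ Qp0)) andbT; apply/row_subP => i.
  have -> : row i D = q i + (-1) *: p0 by apply/rowP => j; rewrite !mxE; ring.
  apply: addmx_sub; first exact: (proj2 (QA _ (Qq i))).
  by apply: scalemx_sub; exact: (proj2 (QA _ Qp0)).
have Du : D *m u^T = 0.
  apply/matrixP => i j; rewrite !mxE (ord1 j).
  transitivity (dotR u (q i - p0)).
    by rewrite /dotR; apply: eq_bigr => l _; rewrite !mxE mulrC.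
  by rewrite dotRBr (proj1 (QA _ (Qq i))) (proj1 (QA _ Qp0)) subrr.
have p0u (i j : 'I_1) : (p0 *m u^T) i j = -1.
  by rewrite (ord1 i) (ord1 j) -dotRE dotRC (proj1 (QA _ Qp0)).
have rfE : row_free E.
  apply: inj_row_free => c cE.
  rewrite -[c]hsubmxK /E mul_row_col in cE.
  have c20 : rsubmx c = 0.
    have := congr1 (fun M => (M *m u^T) 0 0) cE.
    rewrite mulmxDl -!mulmxA Du mulmx0 add0r mul0mx mxE big_ord1 mxE.
    rewrite p0u mulrN1 mxE => /eqP; rewrite oppr_eq0 => /eqP c0.
    by apply/rowP => j; rewrite (ord1 j) !mxE -c0; congr (c _ _); apply: val_inj.
  rewrite c20 mul0mx addr0 in cE.
  move: cE => /eqP; rewrite mulmx_free_eq0 // => /eqP c10.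
  rewrite -[c]hsubmxK c10 c20; apply/rowP => j; rewrite !mxE.
  by case: splitP => ? _; rewrite mxE.
by have := mxrankS EA; move: rfE; rewrite /row_free => /eqP ->; rewrite addn1; lia.
Qed.

End AffineDimension.

Section SeqExtrema.
Variables (R : realType) (T : eqType).

Lemma seq_argmin (s : seq T) (f : T -> R) a : a \in s ->
  exists2 b, b \in s & forall u, u \in s -> f b <= f u.
Proof.
move=> a_s; have ia : (index a s < size s)%N by rewrite index_mem.
have [i _ imin] :=
  @arg_minP _ R _ (Ordinal ia) predT (fun i : 'I_(size s) => f (nth a s i)) isT.
exists (nth a s i); first exact: mem_nth.
move=> u us; have iu : (index u s < size s)%N by rewrite index_mem.
by rewrite -(nth_index a us); exact: (imin (Ordinal iu)).
Qed.

Lemma seq_margin (s : seq T) (f : T -> R) c : (forall u, u \in s -> c < f u) ->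
  exists2 d, 0 < d & forall u, u \in s -> c + d <= f u.
Proof.
case: s => [|a s] H; first by exists 1.
have [b bs bmin] := seq_argmin f (mem_head a s).
exists (f b - c); first by rewrite subr_gt0 H.
by move=> u us; rewrite addrC subrK bmin.
Qed.

End SeqExtrema.

Section Polytope.
Variables (R : realType) (n : nat) (V : seq 'rV[int]_n.+1).
Local Notation N := n.+1.
Local Notation pt := 'rV[R]_N.
Local Notation P := (@conv R N V).
Local Notation sV := (size V).
Implicit Types (u d m z : pt) (S : {set 'I_sV}).

Definition vert (i : 'I_sV) : pt := toR (nth 0 V i).

Definition in_dual u := forall i, -1 <= dotR u (vert i).

Definition tight u := [set i : 'I_sV | dotR u (vert i) == -1].

Definition vert_mx S : 'M[R]_(sV, N) :=
  \matrix_(i, j) (if i \in S then vert i 0 j else 0).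

Definition dual_vertex u := in_dual u /\ \rank (vert_mx (tight u)) = N.

Definition face_of u : pt -> Prop := fun m => P m /\ dotR u m = -1.

Lemma conv_vert i : P (vert i).
Proof.
exists (fun j => (j == i)%:R); split; first by move=> j; case: (j == i).
split; first by rewrite (bigD1 i) //= eqxx big1 ?addr0 // => j /negPf ->.
rewrite (bigD1 i) //= eqxx scale1r big1 ?addr0 // => j /negPf ->.
by rewrite scale0r.
Qed.

Lemma conv_convex a b t : P a -> P b -> 0 <= t <= 1 -> P (t *: a + (1 - t) *: b).
Proof.
move=> [wa [wa0 [wa1 aE]]] [wb [wb0 [wb1 bE]]] /andP [t0 t1].
exists (fun i => t * wa i + (1 - t) * wb i); split.
  by move=> i; apply: addr_ge0; apply: mulr_ge0 => //; rewrite subr_ge0.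
split; first by rewrite big_split /= -!mulr_sumr wa1 wb1 !mulr1 subrKC.
rewrite aE bE !scaler_sumr -big_split /=; apply: eq_bigr => i _.
by rewrite [RHS]scalerDl !scalerA.
Qed.

Lemma conv_bounded : exists B, forall m, P m -> forall j, `|m 0 j| <= B.
Proof.
exists (\sum_i \sum_j `|vert i 0 j|) => m [w [w0 [w1 mE]]] j.
rewrite mE summxE; apply: le_trans (ler_norm_sum _ _ _) _; apply: ler_sum => i _.
rewrite !mxE normrM (ger0_norm (w0 i)).
have wi1 : w i <= 1 by rewrite -w1 (bigD1 i) //= lerDl sumr_ge0.
apply: le_trans (_ : `|vert i 0 j| <= _); last by rewrite (bigD1 j) //= lerDl sumr_ge0.
by rewrite /vert !mxE -[X in _ <= X]mul1r ler_wpM2r.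
Qed.

Lemma in_dual_conv u m : in_dual u -> P m -> -1 <= dotR u m.
Proof.
move=> du [w [w0 [w1 ->]]]; rewrite dotR_sumr -w1 -sumrN.
by apply: ler_sum => i _; have := du i; have := w0 i; nra.
Qed.

Lemma face_of_face u : in_dual u -> face P (face_of u).
Proof. by move=> du; exists u, (-1); split=> // m; exact: in_dual_conv. Qed.

Lemma tight_support u m (w : 'I_sV -> R) : in_dual u -> (forall i, 0 <= w i) ->
  \sum_i w i = 1 -> m = \sum_i w i *: vert i -> dotR u m = -1 ->
  forall i, w i != 0 -> i \in tight u.
Proof.
move=> du w0 w1 mE um i wi.
have sum0 : \sum_i w i * (dotR u (vert i) + 1) = 0.
  under eq_bigr => j _ do rewrite mulrDr mulr1.
  by rewrite big_split /= w1 -dotR_sumr -mE um addNr.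
have ge0 j : true -> 0 <= w j * (dotR u (vert j) + 1).
  by move=> _; apply: mulr_ge0 => //; have := du j; lra.
have := @psumr_eq0P _ _ _ _ ge0 sum0 i isT.
by move/eqP; rewrite mulf_eq0 (negPf wi) /= addr_eq0 inE => /eqP ->.
Qed.

Lemma face_of_subset u u' m : in_dual u -> P m -> dotR u m = -1 ->
  tight u \subset tight u' -> dotR u' m = -1.
Proof.
move=> du Pm um sub; have [w [w0 [w1 mE]]] := Pm.
rewrite mE dotR_sumr -w1 -sumrN; apply: eq_bigr => i _.
have [->|wi] := eqVneq (w i) 0; first by rewrite mul0r oppr0.
have := subsetP sub i (tight_support du w0 w1 mE um wi).
by rewrite inE => /eqP ->; rewrite mulrN1.
Qed.

Lemma row_vert_mx S i : row i (vert_mx S) = if i \in S then vert i else 0.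
Proof. by apply/rowP => j; rewrite !mxE; case: (i \in S); rewrite ?mxE. Qed.

Lemma vert_mx_orth S d :
  (forall i, i \in S -> dotR d (vert i) = 0) <-> vert_mx S *m d^T = 0.
Proof.
split=> [orth|dS0].
  apply/matrixP => i j; rewrite !mxE (ord1 j).
  case: (boolP (i \in S)) => iS; last by apply: big1 => l _; rewrite !mxE (negPf iS) mul0r.
  transitivity (dotR d (vert i)); last exact: orth.
  by rewrite /dotR; apply: eq_bigr => l _; rewrite !mxE iS mulrC.
move=> i iS; have := congr1 (fun M : 'M[R]_(sV, 1) => M i 0) dS0.
rewrite !mxE => <-; rewrite /dotR; apply: eq_bigr => l _.
by rewrite !mxE iS mulrC.
Qed.

Lemma vert_mxS S1 S2 : S1 \subset S2 -> (vert_mx S1 <= vert_mx S2)%MS.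
Proof.
move=> sub; apply/row_subP => i; rewrite row_vert_mx.
case: ifP => iS; last exact: sub0mx.
by have := row_sub i (vert_mx S2); rewrite row_vert_mx (subsetP sub i iS).
Qed.

Lemma rank_vert_mx_lt S1 S2 w d : S1 \subset S2 -> w \in S2 ->
  (forall i, i \in S1 -> dotR d (vert i) = 0) -> dotR d (vert w) != 0 ->
  (\rank (vert_mx S1) < \rank (vert_mx S2))%N.
Proof.
move=> sub wS /vert_mx_orth orth dw.
rewrite (ltn_leqif (mxrank_leqif_sup (vert_mxS sub))).
apply/negP => /(submx_trans (row_sub w _)); rewrite row_vert_mx wS => /submxP [D vE].
move: dw; have : vert w *m d^T = 0 by rewrite vE -mulmxA orth mulmx0.
move=> /(congr1 (fun M : 'M[R]_1 => M 0 0)); rewrite -dotRE mxE dotRC => ->.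
by rewrite eqxx.
Qed.

Lemma face_of_sub_vert_mx u m : in_dual u -> P m -> dotR u m = -1 ->
  (m <= vert_mx (tight u))%MS.
Proof.
move=> du Pm um; have [w [w0 [w1 mE]]] := Pm.
rewrite mE; apply: summx_sub => i _.
have [->|wi] := eqVneq (w i) 0; first by rewrite scale0r sub0mx.
apply: scalemx_sub; have := row_sub i (vert_mx (tight u)).
by rewrite row_vert_mx (tight_support du w0 w1 mE um wi).
Qed.

Lemma tight_rank_uniq S u1 u2 : S \subset tight u1 -> S \subset tight u2 ->
  \rank (vert_mx S) = N -> u1 = u2.
Proof.
move=> s1 s2 rk.
have : vert_mx S *m (u1 - u2)^T = 0.
  apply/vert_mx_orth => i iS; rewrite dotRC dotRBr !(dotRC (vert i)).
  by move: (subsetP s1 i iS) (subsetP s2 i iS); rewrite !inE => /eqP -> /eqP ->; rewrite subrr.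
have rf : row_full (vert_mx S) by rewrite /row_full rk.
rewrite -(mulmx0 _ (vert_mx S)) => /(row_full_inj rf) /eqP.
by rewrite trmx_eq0 subr_eq0 => /eqP.
Qed.

Lemma rowsub_vert_mx p S (f : 'I_p -> 'I_sV) : row_free (rowsub f (vert_mx S)) ->
  (forall i, f i \in S) /\ row_free (\matrix_i vert (f i)).
Proof.
move=> rf.
have fS i : f i \in S.
  have := row_free_row_neq0 i rf; apply: contraNT => fi.
  by apply/eqP/rowP => j; rewrite !mxE (negPf fi).
split => //; suff -> : \matrix_i vert (f i) = rowsub f (vert_mx S) by [].
by apply/matrixP => i j; rewrite !mxE fS.
Qed.

Lemma affdim_ge_tight (Q : pt -> Prop) S r :
  (forall i, i \in S -> Q (vert i)) -> \rank (vert_mx S) = r.+1 -> affdim_ge Q r.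
Proof.
move=> QS rk.
have [fS rf] := rowsub_vert_mx (maxrowsub_free (vert_mx S)).
move: (maxrankfun _) fS rf; rewrite rk => f fS rf.
by apply: (affdim_ge_row_free (q := fun i => vert (f i))) rf _ => i; apply: QS.
Qed.

Lemma facet_face_of u : dual_vertex u -> facet P (face_of u).
Proof.
move=> [du rk]; split; first exact: face_of_face.
split.
  apply: (affdim_ge_tight (S := tight u)) rk => i; rewrite inE => /eqP h.
  by split => //; exact: conv_vert.
apply: (not_affdim_ge_span (A := (1%:M : 'M[R]_N)) (u := u)); first by rewrite mxrank1.
by move=> z [_ zu]; split => //; exact: submx1.
Qed.

Lemma normal_face_of u eta : dual_vertex u -> normal P (face_of u) eta -> toR eta = u.
Proof.
move=> [du rk] [_ etaF]; apply: (@tight_rank_uniq (tight u)) => //.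
apply/subsetP => i; rewrite !inE => /eqP h.
have [_] := (etaF (vert i)).1 (conj (conv_vert i) h).
by rewrite pairR_dotR => ->.
Qed.

(* A dual vertex is the unique solution of its tight system, so solving the
   tight systems of all index sets enumerates the dual vertices. *)
Definition tight_solution S : pt :=
  \row_i (if i \in S then -1 else 0) *m pinvmx (vert_mx S)^T.

Definition dual_vertices : seq pt :=
  [seq u <- [seq tight_solution X | X <- enum [set: {set 'I_sV}]] |
     [forall i, -1 <= dotR u (vert i)] && (\rank (vert_mx (tight u)) == N)].

Lemma tight_solution_vertex u : dual_vertex u -> tight_solution (tight u) = u.
Proof.
move=> [du rk].
have ub : u *m (vert_mx (tight u))^T = \row_i (if i \in tight u then -1 else 0).
  apply/rowP => i; rewrite !mxE; case: ifP => it.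
    move: (it); rewrite inE => /eqP <-; rewrite /dotR; apply: eq_bigr => j _.
    by rewrite !mxE it.
  by apply: big1 => j _; rewrite !mxE it mulr0.
have sb : (\row_i (if i \in tight u then -1 else 0) <= (vert_mx (tight u))^T)%MS.
  by apply/submxP; exists u.
have := mulmxKpV sb; rewrite -/(tight_solution _) -{1}ub.
move=> /eqP; rewrite -subr_eq0 -mulmxBl mulmx_free_eq0; last first.
  by rewrite /row_free mxrank_tr rk.
by rewrite subr_eq0 => /eqP.
Qed.

Lemma dual_verticesP u : u \in dual_vertices <-> dual_vertex u.
Proof.
rewrite mem_filter; split=> [/andP [/andP [/forallP du /eqP rk] _] //|vu].
have [du rk] := vu; rewrite rk eqxx andbT; apply/andP; split; first exact/forallP.
by apply/mapP; exists (tight u); rewrite ?mem_enum ?inE ?tight_solution_vertex.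
Qed.

Section Interior.
Hypothesis P0int : interior P 0.

Lemma conv0 : P 0.
Proof. by case: P0int => e [e0 H]; apply: H => j; rewrite subrr normr0. Qed.

Lemma exists_vert_neg d : d != 0 -> exists i, dotR d (vert i) < 0.
Proof.
move=> dn0; case: P0int => e [e0 H].
pose s := 1 + \sum_j `|d 0 j|.
have s0 : 0 < s by rewrite /s ltr_pwDl // sumr_ge0.
pose c := e / s.
have c0 : 0 < c by rewrite /c divr_gt0.
have Pcd : P (- (c *: d)).
  apply: H => j; rewrite !mxE subr0 normrN normrM (gtr0_norm c0).
  have dj : `|d 0 j| <= \sum_l `|d 0 l| by rewrite (bigD1 j) //= lerDl sumr_ge0.
  have -> : e = c * s by rewrite /c mulfVK ?gt_eqF.
  by rewrite ltr_pM2l // /s; lra.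
have [w [w0 [w1 cdE]]] := Pcd.
apply: NNPP => nex.
have : 0 <= dotR d (- (c *: d)).
  rewrite cdE dotR_sumr; apply: sumr_ge0 => i _; apply: mulr_ge0 => //.
  by rewrite leNgt; apply/negP => lt; apply: nex; exists i.
by rewrite dotRNr dotRZr oppr_ge0 pmulr_rle0 // leNgt dotR_gt0.
Qed.

Lemma in_dual_separation z : ~ P z -> exists u, in_dual u /\ dotR u z < -1.
Proof.
move=> nPz.
pose a (i : 'I_sV) : 'rV[R]_(N + 1) := row_mx (vert i) (const_mx 1).
pose b : 'rV[R]_(N + 1) := row_mx z (const_mx 1).
have nc : ~ cone a b.
  move=> [w [w0 bE]]; apply: nPz; exists w; split => //; split.
    have := congr1 (fun M : 'rV[R]_(N + 1) => M 0 (rshift N (ord0 : 'I_1))) bE.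
    rewrite /b row_mxEr mxE summxE => ->; apply: eq_bigr => i _.
    by rewrite mxE /a row_mxEr mxE mulr1.
  apply/rowP => j.
  have := congr1 (fun M : 'rV[R]_(N + 1) => M 0 (lshift 1 j)) bE.
  rewrite /b row_mxEl summxE => ->; rewrite summxE; apply: eq_bigr => i _.
  by rewrite mxE /a row_mxEl !mxE.
have [y [ya yb]] := farkas nc.
pose u := lsubmx y; pose c := rsubmx y 0 0.
have dE m : dotR y (row_mx m (const_mx 1)) = dotR u m + c.
  by rewrite -[y in LHS]hsubmxK dotR_row_mx [X in _ * X]mxE mulr1.
have ua i : 0 <= dotR u (vert i) + c by rewrite -dE; exact: ya.
have ub : dotR u z + c < 0 by rewrite -dE.
have [c0|c0] := ltrP 0 c.
  have ci : 0 < c^-1 by rewrite invr_gt0.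
  exists (c^-1 *: u); split.
    move=> i; rewrite dotRZl.
    have := mulr_ge0 (ltW ci) (ua i); rewrite mulrDr mulVf ?gt_eqF //; lra.
  rewrite dotRZl.
  have : c^-1 * (dotR u z + c) < 0 by rewrite pmulr_rlt0.
  by rewrite mulrDr mulVf ?gt_eqF //; lra.
exfalso; have [u0|un0] := eqVneq u 0.
  have [w [_ [w1 _]]] := conv0.
  have i : 'I_sV.
    case: (size V) w w1 => [w|k w _]; last exact: ord0.
    by rewrite big_ord0 => /eqP; rewrite eq_sym oner_eq0.
  by have := ua i; move: ub; rewrite u0 !dotR0l; lra.
by have [i ui] := exists_vert_neg un0; have := ua i; lra.
Qed.

(* How far one can move from [u] along [d] inside the dual: the least ratio
   over the generators on which [d] is negative (0 if there is none). *)
Definition exit_ratio u d i := (dotR u (vert i) + 1) / - dotR d (vert i).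

Definition exit_time u d :=
  if [pick i | (dotR d (vert i) < 0) &&
      [forall j, (dotR d (vert j) < 0) ==> (exit_ratio u d i <= exit_ratio u d j)]]
  is Some i then exit_ratio u d i else 0.

Lemma exit_timeP u d : in_dual u -> d != 0 ->
  (forall i, i \in tight u -> dotR d (vert i) = 0) ->
  [/\ 0 < exit_time u d, in_dual (u + exit_time u d *: d),
      tight u \subset tight (u + exit_time u d *: d)
    & exists2 w, w \in tight (u + exit_time u d *: d) & dotR d (vert w) < 0].
Proof.
move=> du dn0 orth.
have [i0 i0n] := exists_vert_neg dn0.
have [i Si imin] :=
  @arg_minP _ R _ i0 (fun i => dotR d (vert i) < 0) (exit_ratio u d) i0n.
rewrite /exit_time; case: pickP => [j /andP [jn /forallP jmin] | none]; last first.
  exfalso; have := none i; rewrite Si /=; move/negP; apply; apply/forallP => j.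
  by apply/implyP => /imin.
have jtight : j \notin tight u.
  by apply/negP => /orth; move: jn => /[swap] ->; rewrite ltxx.
have rpos : 0 < exit_ratio u d j.
  rewrite /exit_ratio divr_gt0 ?oppr_gt0 //.
  by have := du j; move: jtight; rewrite inE => /eqP; lra.
split => //.
- move=> l; rewrite dotRDl dotRZl.
  have [ln|lp] := ltrP (dotR d (vert l)) 0.
    have dl : 0 < - dotR d (vert l) by rewrite oppr_gt0.
    have qE : exit_ratio u d l * - dotR d (vert l) = dotR u (vert l) + 1.
      by rewrite /exit_ratio mulfVK // gt_eqF.
    have : exit_ratio u d j * - dotR d (vert l) <= exit_ratio u d l * - dotR d (vert l).
      by rewrite ler_pM2r // (implyP (jmin l) ln).
    by rewrite qE; lra.
  by have := du l; have := mulr_ge0 (ltW rpos) lp; lra.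
- apply/subsetP => l; rewrite !inE dotRDl dotRZl.
  by move=> /[dup] lt /eqP ->; rewrite orth ?inE // mulr0 addr0.
exists j => //; rewrite inE dotRDl dotRZl /exit_ratio.
have dj0 : dotR d (vert j) != 0 by rewrite lt_eqF.
by rewrite invrN mulrN mulNr -mulrA mulVf // mulr1 opprD addrA subrr add0r.
Qed.

Lemma dual_vertex_below z r u : (N - \rank (vert_mx (tight u)) <= r)%N -> in_dual u ->
  exists u', dual_vertex u' /\ dotR u' z <= dotR u z.
Proof.
elim: r u => [|r IH] u hr du.
  exists u; split => //; split => //; apply/eqP; rewrite eqn_leq rank_leq_col /=.
  by rewrite -subn_eq0 -leqn0.
have [rk|rk] := ltnP (\rank (vert_mx (tight u))) N; last first.
  by exists u; split => //; split => //; apply/eqP; rewrite eqn_leq rank_leq_col.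
have [d0 d0n0 d0A] := exists_kernel_vec rk.
pose d := if 0 < dotR d0 z then - d0 else d0.
have dn0 : d != 0 by rewrite /d; case: ifP; rewrite ?oppr_eq0.
have orth i : i \in tight u -> dotR d (vert i) = 0.
  move=> it; have := (proj2 (vert_mx_orth _ _) d0A) i it.
  by rewrite /d; case: ifP => _ //; rewrite dotRNl => ->; rewrite oppr0.
have dz : dotR d z <= 0.
  rewrite /d; case: ifP => h; first by rewrite dotRNl oppr_le0 ltW.
  by rewrite leNgt h.
have [t0 du' sub [w wt wn]] := exit_timeP du dn0 orth.
have rk' := rank_vert_mx_lt sub wt orth (negbT (lt_eqF wn)).
have hr' : (N - \rank (vert_mx (tight (u + exit_time u d *: d))) <= r)%N.
  by move: rk' hr; set a := \rank _; set b := \rank _; lia.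
have [u' [vu' le']] := IH _ hr' du'.
exists u'; split => //; apply: le_trans le' _.
by rewrite dotRDl dotRZl gerDl; apply: mulr_ge0_le0 => //; exact: ltW.
Qed.

Lemma dual_vertex_separation z : ~ P z -> exists u, dual_vertex u /\ dotR u z < -1.
Proof.
move=> nPz; have [u [du uz]] := in_dual_separation nPz.
have [u' [vu' le']] := dual_vertex_below z (leqnn _) du.
by exists u'; split => //; apply: le_lt_trans le' uz.
Qed.

Lemma conv_Hrep m : (forall u, dual_vertex u -> -1 <= dotR u m) -> P m.
Proof.
move=> H; apply: NNPP => nPm; have [u [vu um]] := dual_vertex_separation nPm.
by have := H u vu; rewrite leNgt um.
Qed.

(* Exiting the dual along the directions [d1 + l d2] ([l <= #|{set 'I_sV}|]) of
   the kernel gives pairwise distinct tight sets; so not all exits are vertices. *)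
Lemma raise_tight_rank u m : in_dual u -> P m -> dotR u m = -1 ->
  (\rank (vert_mx (tight u)) + 2 <= N)%N ->
  exists u', [/\ in_dual u', dotR u' m = -1,
    (\rank (vert_mx (tight u)) < \rank (vert_mx (tight u')))%N
  & (\rank (vert_mx (tight u')) <= n)%N].
Proof.
move=> du Pm um rk.
have [d1 [d2 [o1 o2 ind]]] := exists_kernel_pair rk.
pose K := #|{set 'I_sV}|.
pose d (l : 'I_K.+1) : pt := d1 + (l : nat)%:R *: d2.
have dn0 l : d l != 0.
  apply/eqP => h; have := ind 1 (l : nat)%:R; rewrite scale1r => /(_ h) [/eqP].
  by rewrite oner_eq0.
have orth l i : i \in tight u -> dotR (d l) (vert i) = 0.
  move=> it; rewrite dotRDl dotRZl.
  by rewrite (proj2 (vert_mx_orth _ _) o1 i it) (proj2 (vert_mx_orth _ _) o2 i it) mulr0 addr0.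
pose ul l := u + exit_time u (d l) *: d l.
have exit l := exit_timeP du (dn0 l) (orth l).
have rk_up l : (\rank (vert_mx (tight u)) < \rank (vert_mx (tight (ul l))))%N.
  have [_ _ sub [w wt wn]] := exit l.
  exact: rank_vert_mx_lt sub wt (orth l) (negbT (lt_eqF wn)).
apply: NNPP => H.
have rkN l : \rank (vert_mx (tight (ul l))) = N.
  apply/eqP; rewrite eqn_leq rank_leq_col /= ltnNge; apply/negP => le.
  apply: H; exists (ul l); have [_ dl sub _] := exit l.
  by split; [|exact: face_of_subset du Pm um sub|exact: rk_up|].
have inj : injective (fun l => tight (ul l)).
  move=> l1 l2 /= e.
  have : ul l1 = ul l2 by apply: (@tight_rank_uniq (tight (ul l1))) => //; rewrite e.
  have [t2 _ _ _] := exit l2.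
  move=> /addrI /(pencil_scale_inj ind (lt0r_neq0 t2)) /eqP.
  by rewrite eqr_nat => /eqP /val_inj.
by have := leq_card _ inj; rewrite card_ord ltnn.
Qed.

Lemma ridge_normal m r u : P m -> in_dual u -> dotR u m = -1 ->
  (\rank (vert_mx (tight u)) <= n)%N -> (n - \rank (vert_mx (tight u)) <= r)%N ->
  exists u', [/\ in_dual u', dotR u' m = -1 & \rank (vert_mx (tight u')) = n].
Proof.
move=> Pm; elim: r u => [|r IH] u du um rk hr.
  by exists u; split => //; apply/eqP; rewrite eqn_leq rk /=; lia.
have [e|lt] := eqVneq (\rank (vert_mx (tight u))) n; first by exists u.
have [|u' [du' um' up le]] := raise_tight_rank du Pm um; first by lia.
by apply: (IH u') => //; lia.
Qed.

(* The midpoint of [u1] and [u2] is not a dual vertex; raising its tight rank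
   to [n] while keeping [m] on the face yields the ridge. *)
Lemma ridge_through m u1 u2 : P m -> in_dual u1 -> in_dual u2 -> u1 != u2 ->
  dotR u1 m = -1 -> dotR u2 m = -1 ->
  exists (Q : pt -> Prop) k, face P Q /\ affdim Q k /\ k.+2 = N /\ Q m.
Proof.
move=> Pm d1 d2 u12 m1 m2.
pose u0 := 2^-1 *: (u1 + u2).
have u0E z : dotR u0 z = (dotR u1 z + dotR u2 z) / 2.
  by rewrite /u0 dotRZl dotRDl mulrC.
have du0 : in_dual u0 by move=> i; rewrite u0E; have := d1 i; have := d2 i; lra.
have m0 : dotR u0 m = -1 by rewrite u0E m1 m2; lra.
have sub (u : pt) : u = u1 \/ u = u2 -> tight u0 \subset tight u.
  move=> uu; apply/subsetP => i; rewrite !inE u0E => /eqP h; apply/eqP.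
  by have := d1 i; have := d2 i; case: uu => ->; lra.
have rk0 : (\rank (vert_mx (tight u0)) <= n)%N.
  rewrite -ltnS ltn_neqAle rank_leq_col andbT; apply/eqP => rk.
  by move/eqP: u12; apply; apply: (@tight_rank_uniq (tight u0)); rewrite ?sub; auto.
have [u' [du' mu' rk']] := ridge_normal Pm du0 m0 rk0 (leqnn _).
have mspan := face_of_sub_vert_mx du' Pm mu'.
have [n' nE] : exists n', n = n'.+1.
  case: (posnP n) => [n0|npos]; last by exists n.-1; rewrite prednK.
  exfalso; move/eqP: (etrans rk' n0); rewrite mxrank_eq0 => /eqP t0.
  by move: mspan; rewrite t0 => /submx0null m00; move: mu'; rewrite m00 dotR0r; lra.
exists (face_of u'), n'; split; first exact: face_of_face.
split; last by rewrite nE.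
split.
  apply: (affdim_ge_tight (S := tight u')); last by rewrite rk' nE.
  by move=> i; rewrite inE => /eqP h; split => //; exact: conv_vert.
apply: (not_affdim_ge_span (A := vert_mx (tight u')) (u := u')); first by rewrite rk' nE.
by move=> z [Pz uz]; split => //; exact: face_of_sub_vert_mx du' Pz uz.
Qed.

Lemma interior_of_scaled y s : 1 < s -> P (s *: y) -> interior P y.
Proof.
move=> s1 Psy; case: P0int => e0 [e00 H].
have s0 : 0 < s by lra.
have s10 : 0 < s - 1 by lra.
exists (e0 * (s - 1) / s); split; first by rewrite divr_gt0 // mulr_gt0.
move=> z nz.
pose w := (s / (s - 1)) *: (z - y).
have Pw : P w.
  apply: H => j; rewrite !mxE subr0 normrM gtr0_norm ?divr_gt0 //.
  apply: (lt_le_trans (_ : _ < s / (s - 1) * (e0 * (s - 1) / s))).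
    by rewrite ltr_pM2l ?divr_gt0.
  by rewrite (_ : s / (s - 1) * (e0 * (s - 1) / s) = e0) //; field; rewrite !gt_eqF.
have s_01 : 0 <= s^-1 <= 1.
  by apply/andP; split; [rewrite invr_ge0 ltW|rewrite invf_le1 // ltW].
suff <- : s^-1 *: (s *: y) + (1 - s^-1) *: w = z by exact: conv_convex.
rewrite scalerA mulVf ?gt_eqF // scale1r /w scalerA.
have -> : (1 - s^-1) * (s / (s - 1)) = 1 by field; rewrite !gt_eqF.
by rewrite scale1r addrC subrK.
Qed.

Lemma boundary_face_of y : boundary P y -> exists u, dual_vertex u /\ dotR u y = -1.
Proof.
move=> [Py nint]; apply: NNPP => H.
have gt u : u \in dual_vertices -> -1 < dotR u y.
  move=> /dual_verticesP vu; rewrite lt_neqAle (in_dual_conv vu.1 Py) andbT.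
  by rewrite eq_sym; apply/eqP => e; apply: H; exists u.
have [d d0 Hd] := seq_margin gt.
apply: nint; apply: (@interior_of_scaled y (1 + d)); first lra.
apply: conv_Hrep => u vu; rewrite dotRZr.
by have := Hd u (proj2 (dual_verticesP u) vu); nra.
Qed.

(* The margin is taken relative to the size of the normals, so that a single
   radius works for all of them. *)
Lemma relint_face_of u p : dual_vertex u -> face_of u p ->
  (forall v, dual_vertex v -> v != u -> -1 < dotR v p) -> relint (face_of u) p.
Proof.
move=> vu Gp H; split => //.
pose nv (v : pt) := 1 + \sum_j `|v 0 j|.
have nv0 v : 0 < nv v by rewrite ltr_pwDl // sumr_ge0.
have gt v : v \in [seq w <- dual_vertices | w != u] -> 0 < (dotR v p + 1) / nv v.
  rewrite mem_filter => /andP [vn /dual_verticesP vv].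
  by rewrite divr_gt0 //; have := H v vv vn; lra.
have [e e0 He] := seq_margin gt.
exists e; split => // z [k [q [w [Gq [w1 zE]]]]] nz; rewrite add0r in He.
have uz : dotR u z = -1.
  rewrite zE dotR_sumr; under eq_bigr => i _ do rewrite (Gq i).2 mulrN1.
  by rewrite sumrN w1.
split => //; apply: conv_Hrep => v vv.
have [->|vn] := eqVneq v u; first by rewrite uz.
have vin : v \in [seq w <- dual_vertices | w != u].
  by rewrite mem_filter vn; apply/dual_verticesP.
have := He v vin; rewrite ler_pdivlMr // => ev.
have := dotR_near v (ltW e0) nz; rewrite ler_norml => /andP [near _].
have : (\sum_j `|v 0 j|) * e <= nv v * e by rewrite ler_pM2r // lerDr.
rewrite mulrC in ev; move: ev near; rewrite /nv; lra.
Qed.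

Lemma recession_zero p : (forall u, dual_vertex u -> 0 <= dotR u p) -> p = 0.
Proof.
move=> H; have [B HB] := conv_bounded.
apply/rowP => j; rewrite mxE; apply/eqP; apply: NNPP => /negP pj.
have pj0 : 0 < `|p 0 j| by rewrite normr_gt0.
pose t := (`|B| + 1) / `|p 0 j|.
have Pt : P (t *: p).
  apply: conv_Hrep => u vu; rewrite dotRZr; apply: le_trans (_ : 0 <= _); first lra.
  by apply: mulr_ge0; [rewrite divr_ge0 // addr_ge0|exact: H].
have := HB _ Pt j; rewrite mxE normrM gtr0_norm ?divr_gt0 ?ltr_pwDr //.
by rewrite mulfVK ?gt_eqF //; have := ler_norm B; lra.
Qed.

End Interior.

End Polytope.

Section Lambda.
Variables (R : realType) (n : nat) (V : seq 'rV[int]_n).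
Implicit Types a b : 'rV[int]_n.

Lemma Lambda_add a b : in_Lambda R V a -> in_Lambda R V b -> in_Lambda R V (a + b).
Proof.
move=> [k1 [g1 [c1 [H1 ->]]]] [k2 [g2 [c2 [H2 ->]]]].
exists (k1 + k2)%N, (fun i => match split i with inl j => g1 j | inr j => g2 j end),
  (fun i => match split i with inl j => c1 j | inr j => c2 j end); split.
  by move=> i; case: split.
rewrite big_split_ord /=; congr (_ + _); apply: eq_bigr => i _.
  by rewrite -[lshift k2 i]/(unsplit (inl i)) unsplitK.
by rewrite -[rshift k1 i]/(unsplit (inr i)) unsplitK.
Qed.

Lemma Lambda_scale (c : int) a : in_Lambda R V a -> in_Lambda R V (c *: a).
Proof.
move=> [k [g [c1 [H ->]]]]; exists k, g, (fun i => c * c1 i); split => //.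
by rewrite scaler_sumr; apply: eq_bigr => i _; rewrite scalerA.
Qed.

Lemma Lambda_sub a b : in_Lambda R V a -> in_Lambda R V b -> in_Lambda R V (a - b).
Proof. by move=> La Lb; rewrite -scaleN1r; apply: Lambda_add La (Lambda_scale _ Lb). Qed.

Lemma Lambda_ridge a : (exists (F : 'rV[R]_n -> Prop) d,
    face (conv V) F /\ affdim F d /\ d.+2 = n /\ F (toR a)) -> in_Lambda R V a.
Proof.
move=> [F [d ridge]]; exists 1%N, (fun _ => a), (fun _ => 1); split.
  by move=> _; exists F, d.
by rewrite big_ord1 scale1r.
Qed.

End Lambda.

Section Reflexive.
Variables (R : realType) (n : nat) (V : seq 'rV[int]_n.+1).
Local Notation pt := 'rV[R]_n.+1.
Local Notation lat := 'rV[int]_n.+1.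
Local Notation P := (@conv R n.+1 V).
Local Notation in_dual := (@in_dual R n V).
Local Notation dual_vertex := (@dual_vertex R n V).
Hypothesis refl : reflexive_polytope R V.
Implicit Types (e m : lat) (u : pt).

Lemma reflexive_interior0 : interior P 0. Proof. by case: refl => _ []. Qed.

Lemma dual_vertex_int u : dual_vertex u -> exists e : lat, toR e = u.
Proof.
move=> vu; have [_ [_ normals]] := refl.
have [e ne] := normals _ (facet_face_of vu).
by exists e; exact: normal_face_of vu ne.
Qed.

Lemma normal_in_dual (F : pt -> Prop) e : normal P F e -> in_dual (toR e).
Proof. by move=> [ge _] i; rewrite -pairR_dotR; apply: ge; exact: conv_vert. Qed.

Lemma pairZ_geN1 e m : in_dual (toR e) -> P (toR m) -> -1 <= pairZ e m.
Proof. by move=> de Pm; apply: (@intr_geN1 R); rewrite -dotR_toR; exact: in_dual_conv. Qed.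

Lemma Lambda_two_facets m e1 e2 : P (toR m) -> in_dual (toR e1) -> in_dual (toR e2) ->
  e1 != e2 -> pairZ e1 m = -1 -> pairZ e2 m = -1 -> in_Lambda R V m.
Proof.
move=> Pm d1 d2 e12 m1 m2; apply: Lambda_ridge.
apply: (ridge_through reflexive_interior0 Pm d1 d2).
- by apply: contra e12 => /eqP /toR_inj ->.
- by rewrite dotR_toR m1 intrN1.
- by rewrite dotR_toR m2 intrN1.
Qed.

Lemma conv_Hrep_int m : (forall e, dual_vertex (toR e) -> -1 <= pairZ e m) -> P (toR m).
Proof.
move=> ge; apply: (conv_Hrep reflexive_interior0) => u vu.
have [e eE] := dual_vertex_int vu; rewrite -eE dotR_toR -(intrN1 R) ler_int.
by apply: ge; rewrite eE.
Qed.

End Reflexive.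

Section OrthogonalRoot.
Variables (R : realType) (n : nat) (V : seq 'rV[int]_n.+1).
Local Notation pt := 'rV[R]_n.+1.
Local Notation lat := 'rV[int]_n.+1.
Local Notation P := (@conv R n.+1 V).
Local Notation in_dual := (@in_dual R n V).
Local Notation dual_vertex := (@dual_vertex R n V).
Variables (x y : lat) (Fx : pt -> Prop) (etax : lat).
Hypotheses (refl : reflexive_polytope R V)
  (x_relint : relint Fx (toR x)) (etax_normal : normal P Fx etax)
  (x_notin : ~ in_Lambda R V x)
  (y_boundary : boundary P (toR y)) (y_in : in_Lambda R V y) (y_notin : ~ Fx (toR y)).
Implicit Types (e : lat).

Local Notation k := (pairZ etax y).
Local Notation p := (k *: x + y).

Lemma conv_x : P (toR x).
Proof. by have [Fxx _] := x_relint; have [] := (etax_normal.2 (toR x)).1 Fxx. Qed.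

Lemma pairZ_etax_x : pairZ etax x = -1.
Proof.
have [Fxx _] := x_relint; have [_] := (etax_normal.2 (toR x)).1 Fxx.
by rewrite pairR_toR => /intr_eqN1.
Qed.

Lemma etax_in_dual : in_dual (toR etax).
Proof. exact: normal_in_dual etax_normal. Qed.

Lemma conv_y : P (toR y). Proof. by case: y_boundary. Qed.

Lemma pairZ_etax_y_ge0 : 0 <= k.
Proof.
have := pairZ_geN1 etax_in_dual conv_y; rewrite le_eqVlt => /orP [/eqP k1|]; last lia.
case: y_notin; apply/(etax_normal.2 (toR y)).
by rewrite pairR_toR -k1 intrN1; split => //; exact: conv_y.
Qed.

(* [x] lies on no facet other than [Fx], since it would then lie in a ridge *)
Lemma pairZ_x_ge0 e : dual_vertex (toR e) -> e != etax -> 0 <= pairZ e x.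
Proof.
move=> ve en; have := pairZ_geN1 ve.1 conv_x; rewrite le_eqVlt => /orP [/eqP e1|]; last lia.
by case: x_notin; apply: (Lambda_two_facets refl conv_x ve.1 etax_in_dual en) => //;
  rewrite -?e1 ?pairZ_etax_x.
Qed.

Lemma pairZ_ray e c : pairZ e (c *: x + y) = c * pairZ e x + pairZ e y.
Proof. by rewrite pairZDr pairZZr. Qed.

Lemma conv_ray c : 0 <= c <= k + 1 -> P (toR (c *: x + y)).
Proof.
move=> /andP [c0 ck]; apply: (conv_Hrep_int refl) => e ve; rewrite pairZ_ray.
have [->|en] := eqVneq e etax; first by rewrite pairZ_etax_x; lia.
by have := pairZ_x_ge0 ve en; have := pairZ_geN1 ve.1 conv_y; nia.
Qed.

Lemma pairZ_etax_p : pairZ etax p = 0.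
Proof. by rewrite pairZ_ray pairZ_etax_x; lia. Qed.

Section OrthogonalFacet.
Variable eG : lat.
Hypotheses (vG : dual_vertex (toR eG)) (eG_y : pairZ eG y = -1) (eG_x : pairZ eG x = 0).

(* [(k + 1) x + y] lies on both [Fx] and the facet of [eG] *)
Lemma Lambda_succ_k_x : in_Lambda R V ((k + 1) *: x).
Proof.
have eGn : eG != etax by apply/eqP => E; move: eG_y; rewrite E; have := pairZ_etax_y_ge0; lia.
have Lz : in_Lambda R V ((k + 1) *: x + y).
  apply: (Lambda_two_facets refl (conv_ray _) vG.1 etax_in_dual eGn).
  - by have := pairZ_etax_y_ge0; lia.
  - by rewrite pairZ_ray eG_x eG_y; lia.
  - by rewrite pairZ_ray pairZ_etax_x; lia.
by rewrite -(addrK y ((k + 1) *: x)); exact: Lambda_sub.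
Qed.

Lemma pairZ_etax_y_ge1 : 1 <= k.
Proof.
have := pairZ_etax_y_ge0; rewrite le_eqVlt => /orP [/eqP k0|]; last lia.
by case: x_notin; have := Lambda_succ_k_x; rewrite -k0 add0r scale1r.
Qed.

Lemma p_notin_Lambda : ~ in_Lambda R V p.
Proof.
move=> Lp; apply: x_notin.
have -> : x = (k + 1) *: x - k *: x by rewrite scalerDl scale1r addrAC subrr add0r.
apply: Lambda_sub Lambda_succ_k_x _.
by rewrite -(addrK y (k *: x)); exact: Lambda_sub.
Qed.

Lemma conv_p : P (toR p).
Proof. by apply: conv_ray; have := pairZ_etax_y_ge0; lia. Qed.

Lemma p_root : is_root R V p.
Proof.
have pG : pairZ eG p = -1 by rewrite pairZ_ray eG_x eG_y; lia.
exists (@face_of R n V (toR eG)); split; first exact: facet_face_of vG.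
apply: (relint_face_of (reflexive_interior0 refl) vG).
  by split; [exact: conv_p | rewrite dotR_toR pG intrN1].
move=> v vv vn; have [e eE] := dual_vertex_int refl vv; rewrite -eE in vv vn *.
rewrite dotR_toR -(intrN1 R) ltr_int lt_neqAle (pairZ_geN1 vv.1 conv_p) andbT.
apply/eqP => e1; apply: p_notin_Lambda.
apply: (Lambda_two_facets refl conv_p vv.1 vG.1) => //.
by apply: contra vn => /eqP ->.
Qed.

Lemma p_orthogonal (Fp : pt -> Prop) etap :
  relint Fp (toR p) -> normal P Fp etap -> pairZ etap x = 0.
Proof.
move=> [Fpp _] normp; have [_] := (normp.2 _).1 Fpp.
rewrite pairR_toR => /intr_eqN1 pp1.
have dp := normal_in_dual normp.
have en : etap != etax by apply/eqP => E; move: pp1; rewrite E pairZ_etax_p.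
have hy := pairZ_geN1 dp conv_y; have k1 := pairZ_etax_y_ge1.
move: pp1 (pairZ_geN1 dp conv_x); rewrite pairZ_ray le_eqVlt => ppE /orP [/eqP x1|].
  by case: x_notin; apply: (Lambda_two_facets refl conv_x dp etax_in_dual en);
    rewrite -?x1 ?pairZ_etax_x.
by nia.
Qed.

End OrthogonalFacet.

Lemma x_pos_on_y_facets :
  ~ (exists e, [/\ dual_vertex (toR e), pairZ e y = -1 & pairZ e x = 0]) ->
  forall e, dual_vertex (toR e) -> pairZ e y = -1 -> 1 <= pairZ e x.
Proof.
move=> none e ve ey.
have en : e != etax by apply/eqP => E; move: ey; rewrite E; have := pairZ_etax_y_ge0; lia.
have : pairZ e x != 0 by apply/eqP => ex; apply: none; exists e.
by have := pairZ_x_ge0 ve en; lia.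
Qed.

(* If no facet through [y] were orthogonal to [x], then [x + t y] would lie on
   [Fx] and on a facet through [y], for [t] one more than the least pairing of
   [x] with such a facet. *)
Lemma orth_facet_of_k0 : k = 0 ->
  exists e, [/\ dual_vertex (toR e), pairZ e y = -1 & pairZ e x = 0].
Proof.
move=> k0; apply: NNPP => /x_pos_on_y_facets xpos.
have [uy [vuy uyY]] := boundary_face_of (reflexive_interior0 refl) y_boundary.
pose L := [seq u <- @dual_vertices R n V | dotR u (toR y) == -1].
have uyL : uy \in L by rewrite mem_filter uyY eqxx /=; apply/dual_verticesP.
have [b bL bmin] := seq_argmin (fun u => dotR u (toR x)) uyL.
move: bL; rewrite mem_filter => /andP [/eqP bY /dual_verticesP vb].
have [eb ebE] := dual_vertex_int refl vb; rewrite -ebE in vb bY bmin.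
move: bY; rewrite dotR_toR -(intrN1 R) => /intr_inj ebY.
have ebn : eb != etax by apply/eqP => E; move: ebY; rewrite E k0.
pose t := pairZ eb x + 1.
have t2 : 2 <= t by have := xpos _ vb ebY; rewrite /t; lia.
have zE e : pairZ e (x + t *: y) = pairZ e x + t * pairZ e y by rewrite pairZDr pairZZr.
have Pz : P (toR (x + t *: y)).
  apply: (conv_Hrep_int refl) => e ve; rewrite zE.
  have [->|en] := eqVneq e etax; first by rewrite pairZ_etax_x k0; lia.
  have := pairZ_geN1 ve.1 conv_y; rewrite le_eqVlt => /orP [/eqP ey1|]; last first.
    by have := pairZ_x_ge0 ve en; nia.
  have eL : toR e \in L.
    by rewrite mem_filter dotR_toR -ey1 intrN1 eqxx /=; apply/dual_verticesP.
  by have := bmin _ eL; rewrite !dotR_toR ler_int -ey1 /t; lia.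
have Lz : in_Lambda R V (x + t *: y).
  apply: (Lambda_two_facets refl Pz vb.1 etax_in_dual ebn).
    by rewrite zE ebY /t; lia.
  by rewrite zE pairZ_etax_x k0; lia.
by case: x_notin; rewrite -(addrK (t *: y) x); exact: Lambda_sub Lz (Lambda_scale _ y_in).
Qed.

(* If no facet through [y] were orthogonal to [x], then [p] would pair
   nonnegatively with every facet normal, hence vanish. *)
Lemma orth_facet_of_kpos : 0 < k ->
  exists e, [/\ dual_vertex (toR e), pairZ e y = -1 & pairZ e x = 0].
Proof.
move=> kpos; apply: NNPP => /x_pos_on_y_facets xpos.
have p0 : p = 0.
  apply: toR_inj; rewrite toR0; apply: (recession_zero (reflexive_interior0 refl)) => u vu.
  have [e eE] := dual_vertex_int refl vu; rewrite -eE in vu *.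
  rewrite dotR_toR ler0z pairZ_ray.
  have [->|en] := eqVneq e etax; first by rewrite pairZ_etax_x; lia.
  have := pairZ_geN1 vu.1 conv_y; rewrite le_eqVlt => /orP [/eqP ey1|]; last first.
    by have := pairZ_x_ge0 vu en; nia.
  by have := xpos _ vu (esym ey1); rewrite -ey1; nia.
have [uy [vuy uyY]] := boundary_face_of (reflexive_interior0 refl) y_boundary.
have [ey eyE] := dual_vertex_int refl vuy; rewrite -eyE in vuy uyY.
move: uyY; rewrite dotR_toR -(intrN1 R) => /intr_inj eyy.
have k1 : k = 1.
  have := xpos _ vuy eyy; have := pairZ_ray ey k.
  by rewrite p0 pairZ0r eyy; nia.
case: x_notin; have -> : x = - y by apply/eqP; rewrite -addr_eq0 -[x]scale1r -k1 p0.
by rewrite -scaleN1r; exact: Lambda_scale.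
Qed.

Lemma exists_orth_facet :
  exists e, [/\ dual_vertex (toR e), pairZ e y = -1 & pairZ e x = 0].
Proof.
have := pairZ_etax_y_ge0; rewrite le_eqVlt => /orP [/eqP k0|]; last exact: orth_facet_of_kpos.
exact: orth_facet_of_k0.
Qed.

Lemma orthogonal_root :
  1 <= k /\ is_root R V p /\ ~ in_Lambda R V p /\ pairZ etax p = 0 /\
  (forall (Fp : pt -> Prop) etap,
      facet P Fp -> relint Fp (toR p) -> normal P Fp etap -> pairZ etap x = 0).
Proof.
have [eG [vG eG_y eG_x]] := exists_orth_facet.
split; first exact: pairZ_etax_y_ge1 vG eG_y eG_x.
split; first exact: p_root vG eG_y eG_x.
split; first exact: p_notin_Lambda vG eG_y eG_x.
split; first exact: pairZ_etax_p.
by move=> Fp etap _ pr; exact: p_orthogonal vG eG_y eG_x Fp etap pr.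
Qed.

End OrthogonalRoot.

Theorem mainTheorem2 (R : realType) (n : nat) (V : seq 'rV[int]_n)
    (x y : 'rV[int]_n) (Fx : 'rV[R]_n -> Prop) (etax : 'rV[int]_n) :
  reflexive_polytope R V ->
  facet (conv V) Fx -> relint Fx (toR x) -> normal (conv V) Fx etax ->
  ~ in_Lambda R V x ->
  boundary (conv V) (toR y : 'rV[R]_n) -> in_Lambda R V y -> ~ Fx (toR y) ->
  let p := pairZ etax y *: x + y in
  1 <= pairZ etax y /\
  is_root R V p /\ ~ in_Lambda R V p /\
  pairZ etax p = 0 /\
  (forall (Fp : 'rV[R]_n -> Prop) (etap : 'rV[int]_n),
      facet (conv V) Fp -> relint Fp (toR p) -> normal (conv V) Fp etap ->
      pairZ etap x = 0).
Proof.
case: n V x y Fx etax => [|n] V x y Fx etax refl _ x_relint etax_normal.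
  case: x_relint => Fxx _; have [_] := (etax_normal.2 (toR x)).1 Fxx.
  by rewrite /pairR big_ord0 => /eqP; rewrite eq_sym oppr_eq0 oner_eq0.
exact: orthogonal_root.
Qed.
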